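(* For every integer $r\ge 2$, $m(K_{1*r,3})=3$.
   Context: All graphs are finite, simple and undirected. A list assignment $L$ for a graph $G$ assigns to each vertex $v$ a set $L(v)$ of colors; an $L$-coloring is a proper vertex coloring $c$ of $G$ with $c(v)\in L(v)$ for every vertex $v$. A $k$-list assignment is a list assignment with $|L(v)|=k$ for all $v$. $G$ is uniquely $k$-list colorable (U$k$LC) if there exists a $k$-list assignment $L$ such that $G$ has exactly one $L$-coloring. $G$ has property $M(k)$ if it is not U$k$LC, i.e. for every $k$-list assignment $L$, $G$ has either no $L$-coloring or at least two $L$-colorings. The m-number $m(G)$ is the least integer $k\ge 1$ such that $G$ has property $M(k)$. $K_{1*r,s}$ denotes the complete $(r+1)$-partite graph with $r$ parts of size $1$ and one part of size $s$. *)

From mathcomp Require Import all_boot.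
Set Implicit Arguments. Unset Strict Implicit. Unset Printing Implicit Defensive.

(* A simple graph is a symmetric irreflexive relation [e] on a finType [T].
   Colors are natural numbers; a list L(v) is a duplicate-free seq of colors. *)

Section ListColoring.
Variable T : finType.
Variable e : rel T.

Definition L_coloring (L : T -> seq nat) (c : T -> nat) : Prop :=
  (forall x y, e x y -> c x != c y) /\ (forall v, c v \in L v).

Definition k_list_assignment (k : nat) (L : T -> seq nat) : Prop :=
  forall v, uniq (L v) /\ size (L v) = k.

Definition UkLC (k : nat) : Prop :=
  exists L, k_list_assignment k L /\
    exists c, L_coloring L c /\
      forall c', L_coloring L c' -> forall v, c' v = c v.

Definition property_M (k : nat) : Prop := ~ UkLC k.

Definition is_m_number (m : nat) : Prop :=
  1 <= m /\ property_M m /\ (forall k, 1 <= k -> k < m -> ~ property_M k).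

End ListColoring.

(* K_{1*r,s}: vertices 'I_(r+s); vertices i < r are the r singleton parts,
   vertices r, ..., r+s-1 form the part of size s. *)
Definition K1rs (r s : nat) : rel 'I_(r + s) :=
  fun i j => (i != j) && ((i < r) || (j < r)).
Arguments K1rs r s : clear implicits.

From mathcomp Require Import all_boot.
From mathcomp Require Import zify.
From Stdlib Require Import Classical.

Set Implicit Arguments.
Unset Strict Implicit.
Unset Printing Implicit Defensive.

(* Every graph is uniquely 1-list colorable, and K_{1*r,3} is uniquely 2-list
   colorable through an explicit assignment. For M(3), let c be an L-coloring
   for a 3-list assignment L. If some vertex v has a color of L(v) that no
   neighbour uses, recolor v. Otherwise both other colors of L(v) occur on
   neighbours of v. Two vertices of equal color both lie in the part of size 3,
   so two distinct colors cannot both be shared: v has a neighbour f(v) whose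
   color lies in L(v) and is used nowhere else. Along a cycle of f, giving each
   vertex the color of its successor yields a second L-coloring. *)

Lemma exists_periodic_point (T : finType) (f : T -> T) (x : T) :
  exists y n, 0 < n /\ iter n f y = y.
Proof.
have /trajectP [i lt_i_ord Ei] := looping_order f x.
exists (iter i f x), (order f x - i); split; first by rewrite subn_gt0.
by rewrite -iterD subnK ?Ei // ltnW.
Qed.

Section PeriodicOrbit.
Variables (T : eqType) (f : T -> T) (y : T) (n : nat).
Hypotheses (n_gt0 : 0 < n) (periodic_y : iter n f y = y).

Lemma periodic_orbit_closed x :
  x \in traject f y n -> f x \in traject f y n.
Proof.
case/trajectP=> i lt_i_n ->; apply/trajectP; rewrite -iterS.
have [lt_Si_n | ge_Si_n] := ltnP i.+1 n; first by exists i.+1.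
by exists 0; rewrite // (_ : i.+1 = n) //; lia.
Qed.

Lemma periodic_orbit_inj : {in traject f y n &, injective f}.
Proof.
have f_back x : x \in traject f y n -> iter n.-1 f (f x) = x.
  case/trajectP=> i _ ->; rewrite -iterS -iterD.
  by rewrite (_ : n.-1 + i.+1 = i + n) 1?iterD ?periodic_y //; lia.
by move=> x1 x2 Sx1 Sx2 Ef; rewrite -(f_back x1) // -(f_back x2) // Ef.
Qed.
End PeriodicOrbit.

Section OtherColorings.
Variables (T : finType) (e : rel T) (L : T -> seq nat) (c : T -> nat).
Hypotheses (e_irr : irreflexive e) (e_sym : symmetric e).
Hypothesis c_col : L_coloring e L c.

Definition color_unique (y : T) := forall z, c z = c y -> z = y.

Definition another_L_coloring := exists2 c', L_coloring e L c' & exists w, c' w != c w.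

Lemma color_uniquePn y : ~ color_unique y -> exists2 z, c z = c y & z != y.
Proof.
move=> yNunique; apply: NNPP => no_z; apply: yNunique => z czy.
by apply: NNPP => zNy; apply: no_z; exists z => //; apply/eqP.
Qed.

Lemma another_L_coloring_recolor v g :
  g \in L v -> g != c v -> (forall y, e v y -> c y != g) -> another_L_coloring.
Proof.
move=> gL gNcv g_free; case: c_col => c_proper c_L.
exists (fun x => if x == v then g else c x); last by exists v; rewrite eqxx.
split=> [x y exy | x]; last by case: eqP => [-> | _]; [exact: gL | exact: c_L].
case: (eqVneq x v) => [xv | xNv]; case: (eqVneq y v) => [yv | yNv].
- by move: exy; rewrite xv yv e_irr.
- by rewrite eq_sym g_free // -xv.
- by rewrite g_free // e_sym -yv.
- exact: c_proper.
Qed.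

Lemma another_L_coloring_rotate (f : T -> T) (x0 : T) :
  (forall v, f v != v) -> (forall v, c (f v) \in L v) ->
  (forall v, color_unique (f v)) -> another_L_coloring.
Proof.
move=> f_moves cf_L f_unique; case: c_col => c_proper c_L.
have [y [n [n_gt0 periodic_y]]] := exists_periodic_point f x0.
pose S := traject f y n.
have fS := periodic_orbit_closed n_gt0 periodic_y.
have f_inj := periodic_orbit_inj n_gt0 periodic_y.
exists (fun v => if v \in S then c (f v) else c v); last first.
  exists y; rewrite (_ : y \in S); last by rewrite /S -(prednK n_gt0) mem_head.
  by apply: contraNneq (f_moves y) => /esym/f_unique y_fy; rewrite -y_fy.
split=> [x z exz | v]; last by case: (v \in S).
case Sx: (x \in S); case Sz: (z \in S).
- apply/eqP => /f_unique fx_fz.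
  by move: exz; rewrite (f_inj x z Sx Sz fx_fz) e_irr.
- by apply: contraFneq Sz => /esym/f_unique ->; apply: fS.
- by apply: contraFneq Sx => /f_unique ->; apply: fS.
- exact: c_proper.
Qed.
End OtherColorings.

Lemma property_M_of_another_L_coloring (T : finType) (e : rel T) k :
  (forall L c, k_list_assignment k L -> L_coloring e L c -> another_L_coloring e L c) ->
  property_M e k.
Proof.
move=> another [L [L_k [c [c_col c_only]]]].
have [c' /c_only c'_eq [w]] := another L c L_k c_col.
by rewrite c'_eq eqxx.
Qed.

Lemma UkLC_1 (T : finType) (e : rel T) : irreflexive e -> UkLC e 1.
Proof.
move=> e_irr; exists (fun v => [:: enum_rank v : nat]); split=> // .
exists (fun v => enum_rank v : nat); split.
  split=> [x y exy | v]; last exact: mem_head.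
  apply: contraTneq exy => /ord_inj/enum_rank_inj ->; by rewrite e_irr.
by move=> c' [_ c'_L] v; apply/eqP; rewrite -mem_seq1 c'_L.
Qed.

Lemma K1rs_sym r s : symmetric (K1rs r s).
Proof. by move=> i j; rewrite /K1rs eq_sym orbC. Qed.

Lemma K1rs_irr r s : irreflexive (K1rs r s).
Proof. by move=> i; rewrite /K1rs eqxx. Qed.

Lemma K1rs_shared_color_big r s L (c : 'I_(r + s) -> nat) y z :
  L_coloring (K1rs r s) L c -> c z = c y -> z != y -> r <= z.
Proof.
move=> [c_proper _] czy zNy; rewrite leqNgt; apply/negP => z_small.
by have := c_proper z y; rewrite /K1rs zNy z_small czy eqxx => /(_ isT).
Qed.

Section K1r3.
Variables (r : nat) (L : 'I_(r + 3) -> seq nat) (c : 'I_(r + 3) -> nat).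
Hypothesis c_col : L_coloring (K1rs r 3) L c.

Lemma K1r3_color_unique_of_neq y1 y2 :
  c y1 != c y2 -> color_unique c y1 \/ color_unique c y2.
Proof.
move=> cy12; have [|/color_uniquePn [z1 cz1 z1Ny1]] := classic (color_unique c y1).
  by left.
have [|/color_uniquePn [z2 cz2 z2Ny2]] := classic (color_unique c y2).
  by right.
(* Otherwise y1, z1, y2, z2 are four distinct vertices of the part of size 3. *)
have big := K1rs_shared_color_big c_col.
have y1Nz1 : y1 != z1 by rewrite eq_sym.
have y2Nz2 : y2 != z2 by rewrite eq_sym.
have := big _ _ cz1 z1Ny1; have := big _ _ (esym cz1) y1Nz1.
have := big _ _ cz2 z2Ny2; have := big _ _ (esym cz2) y2Nz2.
have ne (a b : 'I_(r + 3)) : c a != c b -> val a != val b.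
  by apply: contraNneq => /val_inj ->.
have := ne _ _ cy12; rewrite -cz1 in cy12; have := ne _ _ cy12.
rewrite -cz2 in cy12; have := ne _ _ cy12; rewrite cz1 in cy12.
have := ne _ _ cy12; move: y1Nz1 y2Nz2; rewrite -!(inj_eq val_inj) /=.
have := ltn_ord y1; have := ltn_ord y2; have := ltn_ord z1; have := ltn_ord z2.
lia.
Qed.

Lemma K1r3_color_unique_witness v :
  uniq (L v) -> size (L v) = 3 ->
  (forall g, g \in L v -> g != c v -> exists y, c y = g) ->
  exists y, [/\ y != v, c y \in L v & color_unique c y].
Proof.
move=> Lv_uniq Lv_size used.
have others := mem_rem_uniq (c v) Lv_uniq.
have := rem_uniq (c v) Lv_uniq; have := size_rem (c_col.2 v); rewrite Lv_size.
case: (rem (c v) (L v)) others => [|g1 [|g2 []]] // others _.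
rewrite /= inE andbT => g12.
have [g1Ncv g1L] : g1 != c v /\ g1 \in L v.
  by move: (others g1); rewrite mem_head inE => /esym/andP.
have [g2Ncv g2L] : g2 != c v /\ g2 \in L v.
  by move: (others g2); rewrite !inE eqxx orbT => /esym/andP.
have [y1 cy1] := used g1 g1L g1Ncv; have [y2 cy2] := used g2 g2L g2Ncv.
have [y [cyL cyNcv y_unique]] :
    exists y, [/\ c y \in L v, c y != c v & color_unique c y].
  have [] := @K1r3_color_unique_of_neq y1 y2; first by rewrite cy1 cy2.
  - by exists y1; rewrite cy1.
  - by exists y2; rewrite cy2.
by exists y; split=> //; apply: contraNneq cyNcv => ->.
Qed.
End K1r3.

Lemma K1r3_property_M3 r : property_M (K1rs r 3) 3.
Proof.
apply: property_M_of_another_L_coloring => L c L_3 c_col.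
have x0 : 'I_(r + 3) := Ordinal (ltn_addl r (ltn0Sn 2)).
have [[v [g [gL gNcv g_free]]] | no_free] := classic
  (exists v g, [/\ g \in L v, g != c v & forall y, K1rs r 3 v y -> c y != g]).
  exact (another_L_coloring_recolor (@K1rs_irr r 3) (@K1rs_sym r 3) c_col gL gNcv g_free).
have witness v : exists y, [/\ y != v, c y \in L v & color_unique c y].
  apply: (K1r3_color_unique_witness c_col (L_3 v).1 (L_3 v).2) => g gL gNcv.
  apply: NNPP => g_unused; apply: no_free; exists v, g; split=> // y _.
  by apply: contra_not_neq g_unused; exists y.
have [f f_spec] := fin_all_exists witness.
apply: (@another_L_coloring_rotate _ _ _ _ (@K1rs_irr r 3) c_col f x0) => v.
all: by have [] := f_spec v.
Qed.

(* Coloring vertex 0 with 0 would force the vertices r and r + 1 to the colors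
   1 and 2, leaving none for vertex 1; once vertex 0 has color 1, each vertex
   i < r is forced to i + 1, and then the part of size 3 to 0. *)
Definition K1r3_2list r (i : nat) : seq nat :=
  if i < r then [:: i; i.+1] else [:: 0; if i == r.+1 then 2 else 1].

Definition K1r3_2coloring r (i : nat) : nat := if i < r then i.+1 else 0.

Section K1r3_2list_uniqueness.
Variables (r : nat) (c : 'I_(r + 3) -> nat).
Hypothesis r_ge2 : 2 <= r.
Hypothesis c_col : L_coloring (K1rs r 3) (fun v : 'I_(r + 3) => K1r3_2list r v) c.

Let vertex k : k < r + 3 -> exists v : 'I_(r + 3), nat_of_ord v = k.
Proof. by move=> lt_k; exists (Ordinal lt_k). Qed.

Let colors_neq (x y : 'I_(r + 3)) : nat_of_ord x != y -> (x < r) || (y < r) -> c x != c y.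
Proof. by move=> xNy xy_small; apply: c_col.1; rewrite /K1rs xy_small andbT. Qed.

Let other_color (x : 'I_(r + 3)) a b : K1r3_2list r x = [:: a; b] -> c x != a -> c x = b.
Proof. by move=> Lx; have := c_col.2 x; rewrite /= Lx !inE => /orP [-> | /eqP]. Qed.

Lemma K1r3_2list_color0 v : nat_of_ord v = 0 -> c v = 1.
Proof.
move=> v0; have Lv : K1r3_2list r v = [:: 0; 1] by rewrite /K1r3_2list v0 ifT //; lia.
apply: other_color Lv _; apply/negP => /eqP cv0.
have [w1 w1_r] : exists w : 'I_(r + 3), nat_of_ord w = r by apply: vertex; lia.
have [w2 w2_r] : exists w : 'I_(r + 3), nat_of_ord w = r.+1 by apply: vertex; lia.
have [u1 u1_1] : exists w : 'I_(r + 3), nat_of_ord w = 1 by apply: vertex; lia.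
have Lw1 : K1r3_2list r w1 = [:: 0; 1] by rewrite /K1r3_2list w1_r ltnn ifF //; lia.
have Lw2 : K1r3_2list r w2 = [:: 0; 2] by rewrite /K1r3_2list w2_r ltnNge leqnSn eqxx.
have Lu1 : K1r3_2list r u1 = [:: 1; 2] by rewrite /K1r3_2list u1_1 ifT //; lia.
have cw1 : c w1 = 1.
  by apply: other_color Lw1 _; rewrite -cv0 colors_neq ?v0 ?w1_r //; lia.
have cw2 : c w2 = 2.
  by apply: other_color Lw2 _; rewrite -cv0 colors_neq ?v0 ?w2_r //; lia.
have cu1 : c u1 = 2.
  by apply: other_color Lu1 _; rewrite -cw1 colors_neq ?u1_1 ?w1_r //; lia.
suff: c u1 != c w2 by rewrite cu1 cw2.
by apply: colors_neq; rewrite u1_1 w2_r; lia.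
Qed.

Lemma K1r3_2list_color_small (v : 'I_(r + 3)) : v < r -> c v = (nat_of_ord v).+1.
Proof.
suff small n : forall u : 'I_(r + 3), nat_of_ord u = n -> n < r -> c u = n.+1.
  exact: small.
elim: n => [u u0 _ | n IHn u uSn lt_Sn_r]; first exact: K1r3_2list_color0.
have [w w_n] : exists w : 'I_(r + 3), nat_of_ord w = n by apply: vertex; lia.
have Lu : K1r3_2list r u = [:: n.+1; n.+2] by rewrite /K1r3_2list uSn lt_Sn_r.
by apply: other_color Lu _; rewrite -(IHn w w_n) ?colors_neq ?w_n ?uSn //; lia.
Qed.

Lemma K1r3_2list_color_big (v : 'I_(r + 3)) : r <= v -> c v = 0.
Proof.
move=> v_big; have [u0 u0_0] : exists u : 'I_(r + 3), nat_of_ord u = 0 by apply: vertex; lia.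
have [u1 u1_1] : exists u : 'I_(r + 3), nat_of_ord u = 1 by apply: vertex; lia.
have cvN1 : c v != 1.
  by rewrite -(K1r3_2list_color0 u0_0) colors_neq ?u0_0 //; lia.
have cvN2 : c v != 2.
  by rewrite -[2]/(1.+1) -u1_1 -K1r3_2list_color_small ?colors_neq ?u1_1 //; lia.
have := c_col.2 v; rewrite /= /K1r3_2list ltnNge v_big /=.
by case: ifP => _; rewrite !inE ?(negbTE cvN1) ?(negbTE cvN2) orbF => /eqP.
Qed.
End K1r3_2list_uniqueness.

Lemma K1r3_U2LC r : 2 <= r -> UkLC (K1rs r 3) 2.
Proof.
move=> r_ge2; exists (fun v : 'I_(r + 3) => K1r3_2list r v); split.
  move=> v; rewrite /K1r3_2list; case: ifP => _; [|case: ifP => _]; split=> //=.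
  by rewrite inE andbT; lia.
exists (fun v : 'I_(r + 3) => K1r3_2coloring r v); split.
  split=> [x y /andP [xNy xy_small] | v]; rewrite /= /K1r3_2coloring.
    have xNy' : nat_of_ord x != y by [].
    by case: ifP => x_small; case: ifP => y_small; rewrite ?x_small ?y_small in xy_small *; lia.
  by rewrite /K1r3_2list; case: ifP => _; rewrite !inE eqxx ?orbT.
move=> c' c'_col v; rewrite /= /K1r3_2coloring.
case: ifP => [v_small | /negbT]; first exact: K1r3_2list_color_small.
by rewrite -leqNgt; apply: K1r3_2list_color_big.
Qed.

Theorem proposition3p7 (r : nat) (hr : 2 <= r) :
  is_m_number (K1rs r 3) 3.
Proof.
split=> //; split; first exact: K1r3_property_M3.
move=> k k_ge1 k_lt3; apply.
have [-> | ->] : k = 1 \/ k = 2 by lia.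
- exact: UkLC_1 (@K1rs_irr r 3).
- exact: K1r3_U2LC.
Qed.
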